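(* Let $(X,u)$ be a Čech closure space and $Y$ a topological space, let $Y^X$ be the set of all continuous maps $(X,u)\to Y$, let $(f_\lambda)_{\lambda\in\Lambda}$ be a net in $Y^X$ and $f\in Y^X$. Then $(f_\lambda)$ converges continuously to $f$ if and only if $$\overline{\lim_{\Lambda}}\, f_\lambda^{-1}(B)\subset f^{-1}(B)\quad\text{for every closed subset } B\subset Y.$$
   Context: A Čech closure space $(X,u)$ is a set $X$ with an operator $u:\mathcal P(X)\to\mathcal P(X)$ satisfying $u(\emptyset)=\emptyset$, $A\subset u(A)$, and $u(A\cup B)=u(A)\cup u(B)$. The interior is $\mathrm{int}_u A=X\setminus u(X\setminus A)$; $U$ is a neighbourhood of $x$ if $x\in\mathrm{int}_uU$. A topological space is regarded as a closure space with its (Kuratowski) closure operator. A map $f:(X,u)\to(Y,v)$ is continuous if $f(u(A))\subset v(f(A))$ for all $A\subset X$. A net $(x_\mu)$ converges to $x$ if it is eventually in every neighbourhood of $x$. A net $(f_\lambda)_{\lambda\in\Lambda}$ in $Y^X$ converges continuously to $f\in Y^X$ if, whenever a net $(x_\mu)_{\mu\in M}$ converges to $x$ in $(X,u)$, the net $(f_\lambda(x_\mu))_{(\lambda,\mu)\in\Lambda\times M}$ (coordinatewise order) converges to $f(x)$ in $Y$. For a net $(A_\lambda)_{\lambda\in\Lambda}$ of subsets of $X$, its upper limit $\overline{\lim_{\Lambda}}A_\lambda$ is the set of all $x\in X$ such that for every $\lambda_0\in\Lambda$ and every neighbourhood $U$ of $x$ there is $\lambda\ge\lambda_0$ with $A_\lambda\cap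 U\ne\emptyset$. *)

From mathcomp Require Import all_boot all_order.
From mathcomp Require Import boolp classical_sets topology.
Set Implicit Arguments. Unset Strict Implicit. Unset Printing Implicit Defensive.
Local Open Scope classical_set_scope.

Definition is_cech_closure {X : Type} (u : set X -> set X) : Prop :=
  [/\ u set0 = set0, (forall A, A `<=` u A) & (forall A B, u (A `|` B) = u A `|` u B)].

Definition cint {X : Type} (u : set X -> set X) (A : set X) : set X := ~` u (~` A).
Definition cnbhd {X : Type} (u : set X -> set X) (x : X) (U : set X) : Prop := cint u U x.

Definition ccontinuous {X : Type} (u : set X -> set X) {Y : topologicalType}
  (f : X -> Y) : Prop := forall A, f @` (u A) `<=` closure (f @` A).

Definition directed {I : Type} (le : I -> I -> Prop) : Prop :=
  [/\ (exists i : I, True), (forall i, le i i),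
      (forall i j k, le i j -> le j k -> le i k) &
      (forall i j, exists k, le i k /\ le j k)].

Definition prod_le {I J : Type} (leI : I -> I -> Prop) (leJ : J -> J -> Prop)
  (p q : I * J) : Prop := leI p.1 q.1 /\ leJ p.2 q.2.

Definition eventually_net {I : Type} (le : I -> I -> Prop) (P : I -> Prop) : Prop :=
  exists i0, forall i, le i0 i -> P i.

Definition cnet_cvg {X I : Type} (u : set X -> set X) (le : I -> I -> Prop)
  (x_ : I -> X) (x : X) : Prop :=
  forall U, cnbhd u x U -> eventually_net le (fun i => U (x_ i)).

Definition tnet_cvg {Y : topologicalType} {I : Type} (le : I -> I -> Prop)
  (y_ : I -> Y) (y : Y) : Prop :=
  forall U, nbhs y U -> eventually_net le (fun i => U (y_ i)).

Definition converges_continuously {X : Type} (u : set X -> set X)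
  {Y : topologicalType} {L : Type} (leL : L -> L -> Prop)
  (f_ : L -> X -> Y) (f : X -> Y) : Prop :=
  forall (M : Type) (leM : M -> M -> Prop), directed leM ->
  forall (x_ : M -> X) (x : X), cnet_cvg u leM x_ x ->
    tnet_cvg (prod_le leL leM) (fun p => f_ p.1 (x_ p.2)) (f x).

Definition upper_limit {X L : Type} (u : set X -> set X) (le : L -> L -> Prop)
  (A_ : L -> set X) : set X :=
  fun x => forall l0 U, cnbhd u x U -> exists l, le l0 l /\ (A_ l `&` U) !=set0.

(** A point lies in the upper limit of a net of sets [A_l] exactly when it is the
    limit of a net [x_m] such that the double net [(l, m)] frequently has [x_m]
    in [A_l]; for the forward direction, index by pairs of an [l] and a
    neighbourhood [U] of [x], and pick a point of [U `&` A_l'] with [l' >= l].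
    For [A_l = f_l^-1 B], continuous convergence then keeps [f x] out of the open
    set [~` B].  Conversely, if [f_l (x_m)] frequently leaves a neighbourhood [V]
    of [f x], then [x] is in the upper limit of the preimages of the closed set
    [~` interior V]. *)
From mathcomp Require Import all_boot all_order.
From mathcomp Require Import boolp classical_sets topology.
Local Open Scope classical_set_scope.

Section Nets.
Set Implicit Arguments.
Unset Strict Implicit.

Definition frequently_net {I : Type} (le : I -> I -> Prop) (P : I -> Prop) : Prop :=
  forall i0, exists i, le i0 i /\ P i.

Lemma not_eventually_frequently {I : Type} (le : I -> I -> Prop) (P : I -> Prop) :
  ~ eventually_net le P -> frequently_net le (fun i => ~ P i).
Proof.
move=> nev i0; apply: contrapT => nfreq; apply: nev; exists i0 => i le_i0i.
by apply: contrapT => nPi; apply: nfreq; exists i.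
Qed.

Lemma prod_le_directed {I J : Type} (leI : I -> I -> Prop) (leJ : J -> J -> Prop) :
  directed leI -> directed leJ -> directed (prod_le leI leJ).
Proof.
move=> [[i0 _] reflI transI ubI] [[j0 _] reflJ transJ ubJ]; split.
- by exists (i0, j0).
- by move=> p; split; [exact: reflI|exact: reflJ].
- move=> p q r [pq1 pq2] [qr1 qr2]; split; [exact: transI pq1 qr1|exact: transJ pq2 qr2].
- move=> p q; have [i [pi qi]] := ubI p.1 q.1; have [j [pj qj]] := ubJ p.2 q.2.
  by exists (i, j).
Qed.

End Nets.

Section ClosureSpace.
Set Implicit Arguments.
Unset Strict Implicit.
Variables (X : Type) (u : set X -> set X).
Hypothesis Hu : is_cech_closure u.

Lemma cnbhdT (x : X) : cnbhd u x setT.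
Proof. by have [u0 _ _] := Hu; rewrite /cnbhd /cint setCT u0. Qed.

Lemma cnbhdI (x : X) (U V : set X) :
  cnbhd u x U -> cnbhd u x V -> cnbhd u x (U `&` V).
Proof. by have [_ _ uU] := Hu; rewrite /cnbhd /cint setCI uU => ? ? []. Qed.

Definition cnbhd_index (x : X) := {U : set X | cnbhd u x U}.

Definition cnbhd_le (x : X) (U V : cnbhd_index x) : Prop := sval V `<=` sval U.

Lemma cnbhd_le_directed (x : X) : directed (@cnbhd_le x).
Proof.
split.
- by exists (exist _ setT (@cnbhdT x)).
- by move=> U.
- by move=> U V W UV VW y /VW /UV.
- move=> [U nU] [V nV]; exists (exist _ (U `&` V) (cnbhdI nU nV)).
  by split=> y [].
Qed.

Variables (L : Type) (leL : L -> L -> Prop).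

Lemma upper_limit_frequently (M : Type) (leM : M -> M -> Prop)
    (A_ : L -> set X) (x_ : M -> X) (x : X) :
  cnet_cvg u leM x_ x ->
  frequently_net (prod_le leL leM) (fun p => A_ p.1 (x_ p.2)) ->
  upper_limit u leL A_ x.
Proof.
move=> cvg_x freq l0 U nU.
have [m0 ev_U] := cvg_x U nU.
have [[l m] [[l0l m0m] Ax]] := freq (l0, m0).
by exists l; split => //; exists (x_ m); split => //; exact: ev_U.
Qed.

Hypothesis HL : directed leL.

Lemma upper_limit_net (A_ : L -> set X) (x : X) :
  upper_limit u leL A_ x ->
  exists (M : Type) (leM : M -> M -> Prop), directed leM /\
  exists x_ : M -> X, cnet_cvg u leM x_ x /\
    frequently_net (prod_le leL leM) (fun p => A_ p.1 (x_ p.2)).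
Proof.
move=> ulim; have [[l00 _] _ transL ubL] := HL.
have pick_point : forall p : L * cnbhd_index x, exists q : L * X,
    leL p.1 q.1 /\ A_ q.1 q.2 /\ sval p.2 q.2.
  move=> [l0 [U nU]].
  by have [l [l0l [y [Ay Uy]]]] := ulim l0 U nU; exists (l, y).
have [g g_spec] := choice pick_point.
exists (L * cnbhd_index x)%type, (prod_le leL (@cnbhd_le x)); split.
  exact: prod_le_directed HL (@cnbhd_le_directed x).
exists (fun p => (g p).2); split.
  move=> U nU; exists (l00, exist _ U nU) => p [_ UpU].
  by apply: UpU; have [_ [_ ?]] := g_spec p.
move=> [l1 m1]; have [k [l1k m1k]] := ubL l1 m1.1.
have [kg [Ag _]] := g_spec (k, m1.2).
exists ((g (k, m1.2)).1, (k, m1.2)); split => //.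
by split => /=; [exact: transL l1k kg | split].
Qed.

End ClosureSpace.

Theorem corollary1 (X : Type) (u : set X -> set X) (Hu : is_cech_closure u)
  (Y : topologicalType) (L : Type) (leL : L -> L -> Prop) (HL : directed leL)
  (f_ : L -> X -> Y) (f : X -> Y)
  (Hf_ : forall l, ccontinuous u (f_ l)) (Hf : ccontinuous u f) :
  converges_continuously u leL f_ f <->
  (forall B : set Y, closed B ->
     upper_limit u leL (fun l => f_ l @^-1` B) `<=` f @^-1` B).
Proof.
split.
- move=> cvg_f B closedB x /(upper_limit_net Hu HL) [M [leM [dirM [x_ [cvg_x freq]]]]].
  apply: contrapT => nBfx.
  have nbhs_CB : nbhs (f x) (~` B).
    by apply: open_nbhs_nbhs; split => //; exact: closed_openC.
  have [p0 ev_CB] := cvg_f M leM dirM x_ x cvg_x _ nbhs_CB.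
  by have [p [p0p Bp]] := freq p0; exact: ev_CB p0p Bp.
- move=> ulim M leM _ x_ x cvg_x V nV; apply: contrapT => nev.
  have closed_CiV : closed (~` interior V) := open_closedC (@open_interior _ V).
  apply: (ulim _ closed_CiV x) => //.
  apply: upper_limit_frequently cvg_x _ => p0.
  have [p [p0p nVp]] := not_eventually_frequently nev p0.
  by exists p; split => // /interior_subset.
Qed.
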